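(* For $n\ge 3$ and $1\le m\le n-2$, $$a(n,m)=(n-1)\,a(n-1,m-1)+a(n-1,m).$$
   Context: For $k\ge 2$, $A_k$ is the alternating group on $\{1,\dots,k\}$, $T(A_k)=\{(1\,2)(i\,j)\mid 1\le i<j\le k\}$, and for $v\in A_k$, $\ell_{T(A_k)}(v)=\min\{r\ge 0\mid v=t_1\cdots t_r,\ t_i\in T(A_k)\}$. $a(k,m)$ denotes the number of $v\in A_k$ with $\ell_{T(A_k)}(v)=m$. *)

From mathcomp Require Import all_boot all_fingroup.
From mathcomp Require Import alt.
Set Implicit Arguments. Unset Strict Implicit. Unset Printing Implicit Defensive.
Local Open Scope group_scope.

(* Points {1,...,k} are represented by 'I_k = {0,...,k-1} (point p <-> p-1). *)

Definition TA (k : nat) : {set {perm 'I_k}} :=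
  [set t | [exists a : 'I_k, exists b : 'I_k, exists i : 'I_k, exists j : 'I_k,
     [&& val a == 0%N, val b == 1%N, (i < j)%N & t == tperm a b * tperm i j]]].

Definition prodT (k r : nat) (v : {perm 'I_k}) : bool :=
  [exists s : r.-tuple {perm 'I_k},
     all (fun t => t \in TA k) s && (v == \prod_(t <- s) t)].

Definition lenT_eq (k : nat) (v : {perm 'I_k}) (m : nat) : bool :=
  prodT m v && [forall r : 'I_m, ~~ prodT (val r) v].

Definition a_count (k m : nat) : nat :=
  #|[set v in ('Alt_('I_k))%g | lenT_eq v m]|.

From mathcomp Require Import all_boot all_fingroup alt.
From mathcomp Require Import zify.
Set Implicit Arguments. Unset Strict Implicit. Unset Printing Implicit Defensive.
Local Open Scope group_scope.

(* Let s = (1 2) and c(v) the number of cycles of v.  Every generator is s(i j),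
   and multiplying by a transposition changes c by one, so
   g(v) = max(c(v), c(s v)) drops by at most one per generator; since g(1) = n,
   l(v) >= n - g(v).  Conversely an even v moving n factors uniquely as
   s(j n) u with u fixing n, and then g(v) = g(u) - 1, while an even v fixing n
   has the same g-defect n - g(v) as its restriction to {1..n-1}; by induction
   l(v) = n - g(v).  The same dichotomy splits A_n into a copy of A_(n-1)
   (l unchanged) and n-1 copies of A_(n-1) (l raised by one). *)

Section Cycles.

Variable T : finType.
Implicit Types (s : {perm T}) (x y : T).

Definition ncycles s := #|porbits s|.

Lemma ncycles_le_card s : (ncycles s <= #|T|)%N.
Proof. exact: leq_imset_card. Qed.

Lemma porbit_fixed s y : s y = y -> porbit s y = [set y].
Proof.
move=> sy; apply/setP => z; rewrite inE; apply/porbitP/eqP => [[i ->]|->].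
  by rewrite permX iter_fix.
by exists 0; rewrite expg0 perm1.
Qed.

Lemma ncycles1 : ncycles 1 = #|T|.
Proof.
rewrite /ncycles /porbits card_imset // => x y.
by rewrite !porbit_fixed ?perm1 // => /set1_inj.
Qed.

Lemma leq_ncycles_mul_tperm x y s : (ncycles s <= (ncycles (tperm x y * s)).+1)%N.
Proof.
have := porbits_mul_tperm s x y; rewrite /ncycles /=.
case: eqVneq => [->|_]; first by rewrite porbit_id /=; lia.
by case: (x \in _) => /=; lia.
Qed.

Lemma ncycles_mul_tperm_fixed x y s : s y = y -> x != y ->
  (ncycles (tperm x y * s)).+1 = ncycles s.
Proof.
move=> sy nxy; have := porbits_mul_tperm s x y.
by rewrite /ncycles /= porbit_fixed // inE nxy /=; lia.
Qed.

End Cycles.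

Section LiftLast.

Variable n : nat.
Implicit Types (u w : {perm 'I_n}).

Definition lift_last u : {perm 'I_n.+1} := lift_perm ord_max ord_max u.

Lemma lift_last_max u : lift_last u ord_max = ord_max.
Proof. exact: lift_perm_id. Qed.

Lemma lift_last_lift u x : lift_last u (lift ord_max x) = lift ord_max (u x).
Proof. exact: lift_perm_lift. Qed.

Lemma lift_lastM u w : lift_last (u * w) = lift_last u * lift_last w.
Proof. by rewrite /lift_last lift_permM. Qed.

Lemma lift_last1 : lift_last 1 = 1.
Proof. exact: lift_perm1. Qed.

Lemma lift_lastX u i : lift_last (u ^+ i) = lift_last u ^+ i.
Proof.
elim: i => [|i IH]; first by rewrite !expg0 lift_last1.
by rewrite !expgSr lift_lastM IH.
Qed.

Lemma lift_last_prod (l : seq {perm 'I_n}) :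
  lift_last (\prod_(t <- l) t) = \prod_(t <- map lift_last l) t.
Proof. by rewrite big_map; apply: (big_morph _ lift_lastM lift_last1). Qed.

Lemma lift_last_inj : injective lift_last.
Proof.
move=> u w euw; apply/permP => x; apply: (@lift_inj _ ord_max).
by rewrite -!lift_last_lift euw.
Qed.

Lemma lift_last_tperm (x y : 'I_n) :
  lift_last (tperm x y) = tperm (lift ord_max x) (lift ord_max y).
Proof.
apply/permP => z; case: (unliftP ord_max z) => [z'|] ->.
  by rewrite lift_last_lift inj_tperm //; apply: lift_inj.
by rewrite lift_last_max tpermD // eq_sym neq_lift.
Qed.

Lemma odd_lift_last u : odd_perm (lift_last u) = odd_perm u.
Proof. by rewrite /lift_last odd_lift_perm addbb. Qed.

Lemma lift_last_Alt u : (lift_last u \in 'Alt_('I_n.+1)) = (u \in 'Alt_('I_n)).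
Proof. by rewrite !Alt_even odd_lift_last. Qed.

Lemma lift_last_fixed (w : {perm 'I_n.+1}) : w ord_max = ord_max ->
  exists u, w = lift_last u.
Proof.
move=> wN; pose f x := odflt x (unlift ord_max (w (lift ord_max x))).
have liftf x : lift ord_max (f x) = w (lift ord_max x).
  have : ord_max != w (lift ord_max x) by rewrite -{1}wN (inj_eq perm_inj) neq_lift.
  by case/unlift_some => j e1 e2; rewrite /f e2 /= -e1.
have f_inj : injective f.
  by move=> x y /(congr1 (lift ord_max)); rewrite !liftf => /perm_inj /lift_inj.
exists (perm f_inj); apply/permP => z; case: (unliftP ord_max z) => [z'|] ->.
  by rewrite lift_last_lift permE liftf.
by rewrite lift_last_max.
Qed.

Lemma porbit_lift_last u x :
  porbit (lift_last u) (lift ord_max x) = lift ord_max @: porbit u x.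
Proof.
apply/setP => y; apply/porbitP/imsetP => [[i ->]|[z /porbitP[i ->] ->]].
  by exists ((u ^+ i) x); rewrite ?mem_porbit // -lift_lastX lift_last_lift.
by exists i; rewrite -lift_lastX lift_last_lift.
Qed.

Lemma porbits_lift_last u : porbits (lift_last u) =
  [set ord_max] |: ((fun S : {set 'I_n} => lift ord_max @: S) @: porbits u).
Proof.
apply/setP => S; rewrite !inE; apply/imsetP/orP => [[z _ ->]|].
  case: (unliftP ord_max z) => [z'|] ->; last by left; rewrite porbit_fixed ?lift_last_max.
  by right; rewrite porbit_lift_last imset_f ?imset_f.
case=> [/eqP ->|/imsetP[_ /imsetP[z _ ->] ->]].
  by exists ord_max; rewrite ?porbit_fixed ?lift_last_max.
by exists (lift ord_max z); rewrite ?porbit_lift_last.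
Qed.

Lemma ncycles_lift_last u : ncycles (lift_last u) = (ncycles u).+1.
Proof.
rewrite /ncycles porbits_lift_last cardsU1 card_imset; last exact/imset_inj/lift_inj.
suff -> : [set ord_max] \notin (fun S : {set 'I_n} => lift ord_max @: S) @: porbits u by [].
apply/imsetP => -[S _ /setP /(_ ord_max)]; rewrite inE eqxx => /esym /imsetP[z _].
by move/eqP; rewrite (negbTE (neq_lift _ _)).
Qed.

End LiftLast.

Arguments lift_last {n}.

Definition sigma12 k : {perm 'I_k.+2} := tperm ord0 (Ordinal (isT : 1 < k.+2)).

Definition maxcyc k (v : {perm 'I_k.+2}) := maxn (ncycles v) (ncycles (sigma12 k * v)).

Definition tlength k (v : {perm 'I_k.+2}) := (k.+2 - maxcyc v)%N.

Lemma maxcyc_le k (v : {perm 'I_k.+2}) : (maxcyc v <= k.+2)%N.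
Proof.
have le_k (s : {perm 'I_k.+2}) : (ncycles s <= k.+2)%N.
  by have := ncycles_le_card s; rewrite card_ord.
by rewrite geq_max !le_k.
Qed.

Lemma sigma12K k : involutive (fun v : {perm 'I_k.+2} => sigma12 k * v).
Proof. by move=> v; rewrite mulgA tperm2 mul1g. Qed.

Lemma sigma12_max k : sigma12 k.+1 ord_max = ord_max.
Proof. by rewrite tpermD // -val_eqE. Qed.

Lemma lift_last_sigma12 k : lift_last (sigma12 k) = sigma12 k.+1.
Proof. by rewrite lift_last_tperm; congr tperm; apply: val_inj. Qed.

Lemma TA_sigma12 k (t : {perm 'I_k.+2}) : t \in TA k.+2 ->
  exists i j : 'I_k.+2, t = sigma12 k * tperm i j.
Proof.
rewrite inE => /existsP[a /existsP[b /existsP[i /existsP[j /and4P[a0 b1 _ /eqP->]]]]].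
by exists i, j; congr (tperm _ _ * _); apply: val_inj; apply/eqP.
Qed.

Lemma lift_last_TA k (t : {perm 'I_k.+2}) : t \in TA k.+2 -> lift_last t \in TA k.+3.
Proof.
have bump_small (x : 'I_k.+2) : bump k.+2 x = x.
  by rewrite /bump leqNgt ltn_ord.
rewrite !inE => /existsP[a /existsP[b /existsP[i /existsP[j /and4P[a0 b1 ij /eqP->]]]]].
apply/existsP; exists (lift ord_max a); apply/existsP; exists (lift ord_max b).
apply/existsP; exists (lift ord_max i); apply/existsP; exists (lift ord_max j).
by rewrite /= !bump_small a0 b1 ij lift_lastM !lift_last_tperm eqxx.
Qed.

Lemma maxcyc_mul_TA k (t w : {perm 'I_k.+2}) : t \in TA k.+2 ->
  (maxcyc w <= (maxcyc (t * w)).+1)%N.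
Proof.
case/TA_sigma12 => i [j ->]; rewrite /maxcyc -!mulgA sigma12K.
(* conjugating by sigma12 moves it to the other side of the transposition *)
have -> : sigma12 k * (tperm i j * w)
        = tperm (sigma12 k i) (sigma12 k j) * (sigma12 k * w).
  by rewrite -tpermJ conjgE tpermV -!mulgA sigma12K.
rewrite -maxnSS geq_max !leq_max.
by rewrite (leq_ncycles_mul_tperm i j) (leq_ncycles_mul_tperm _ _ (sigma12 k * w)) orbT.
Qed.

Lemma tlength_prod_TA k (l : seq {perm 'I_k.+2}) : all (mem (TA k.+2)) l ->
  (tlength (\prod_(t <- l) t) <= size l)%N.
Proof.
rewrite /tlength leq_subLR; elim: l => [_|t l IH /= /andP[tT lT]].
  by rewrite big_nil addn0 /maxcyc ncycles1 card_ord leq_max leqnn.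
rewrite big_cons; apply: leq_trans (IH lT) _.
by rewrite addnS -addSn leq_add2r maxcyc_mul_TA.
Qed.

Lemma maxcyc_lift_last k (u : {perm 'I_k.+2}) : maxcyc (lift_last u) = (maxcyc u).+1.
Proof. by rewrite /maxcyc -lift_last_sigma12 -lift_lastM !ncycles_lift_last maxnSS. Qed.

Lemma tlength_lift_last k (u : {perm 'I_k.+2}) : tlength (lift_last u) = tlength u.
Proof. by rewrite /tlength maxcyc_lift_last subSS. Qed.

Definition gen_last k (j : 'I_k.+2) : {perm 'I_k.+3} :=
  sigma12 k.+1 * tperm (lift ord_max j) ord_max.

Lemma gen_last_TA k (j : 'I_k.+2) : gen_last j \in TA k.+3.
Proof.
rewrite inE; apply/existsP; exists ord0; apply/existsP; exists (Ordinal (isT : 1 < k.+3)).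
apply/existsP; exists (lift ord_max j); apply/existsP; exists ord_max.
by rewrite /= /bump (leqNgt k.+2 j) ltn_ord add0n ltn_ord eqxx.
Qed.

Lemma odd_gen_last k (j : 'I_k.+2) : odd_perm (gen_last j) = false.
Proof. by rewrite odd_permM !odd_tperm -val_eqE /= eq_sym neq_lift. Qed.

Lemma gen_last_lift_Alt k j (u : {perm 'I_k.+2}) :
  (gen_last j * lift_last u \in 'Alt_('I_k.+3)) = (u \in 'Alt_('I_k.+2)).
Proof. by rewrite !Alt_even odd_permM odd_gen_last odd_lift_last. Qed.

Lemma maxcyc_gen_last k j (u : {perm 'I_k.+2}) :
  (maxcyc (gen_last j * lift_last u)).+1 = maxcyc (lift_last u).
Proof.
set s := lift_last u; have sN : s ord_max = ord_max by apply: lift_last_max.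
have jN : lift ord_max j != ord_max by rewrite eq_sym neq_lift.
rewrite /maxcyc /gen_last -mulgA sigma12K maxnC -maxnSS.
have -> : sigma12 k.+1 * (tperm (lift ord_max j) ord_max * s)
        = tperm (sigma12 k.+1 (lift ord_max j)) (sigma12 k.+1 ord_max)
            * (sigma12 k.+1 * s).
  by rewrite -tpermJ conjgE tpermV -!mulgA sigma12K.
rewrite sigma12_max.
have sigma_sN : (sigma12 k.+1 * s) ord_max = ord_max by rewrite permM sigma12_max.
have sigma_jN : sigma12 k.+1 (lift ord_max j) != ord_max.
  by rewrite -{2}(sigma12_max k) (inj_eq perm_inj).
by rewrite (ncycles_mul_tperm_fixed sN jN) (ncycles_mul_tperm_fixed sigma_sN sigma_jN).
Qed.

Lemma tlength_gen_last k j (u : {perm 'I_k.+2}) :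
  tlength (gen_last j * lift_last u) = (tlength u).+1.
Proof.
have := maxcyc_gen_last j u; rewrite maxcyc_lift_last => -[e].
by rewrite /tlength e subSn // maxcyc_le.
Qed.

Lemma invN_gen_last k j (u : {perm 'I_k.+2}) :
  (gen_last j * lift_last u)^-1 ord_max = sigma12 k.+1 (lift ord_max j).
Proof.
apply: (@perm_inj _ (gen_last j * lift_last u)).
by rewrite permKV !permM tpermK tpermL lift_last_max.
Qed.

Lemma gen_last_max k j (u : {perm 'I_k.+2}) :
  (gen_last j * lift_last u) ord_max != ord_max.
Proof.
by rewrite permM /gen_last permM sigma12_max tpermR lift_last_lift eq_sym neq_lift.
Qed.

Lemma gen_last_factor k (v : {perm 'I_k.+3}) : v ord_max != ord_max ->
  exists j u, v = gen_last j * lift_last u.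
Proof.
move=> vN; set x := sigma12 k.+1 (v^-1 ord_max).
have : ord_max != x.
  rewrite /x -{1}(sigma12_max k) (inj_eq perm_inj); apply: contra vN => /eqP e.
  by rewrite {1}e permKV.
case/unlift_some => j ej _.
have gjN : gen_last j (v^-1 ord_max) = ord_max by rewrite permM -/x ej tpermL.
have : ((gen_last j)^-1 * v) ord_max = ord_max by rewrite permM -{1}gjN permK permKV.
by case/lift_last_fixed => u eu; exists j, u; rewrite -eu mulKVg.
Qed.

Lemma prodTP k r (v : {perm 'I_k}) : reflect (exists l, [/\ size l = r,
   all (mem (TA k)) l & v = \prod_(t <- l) t]) (prodT r v).
Proof.
apply: (iffP existsP) => [[s /andP[sT /eqP->]]|[l [<- lT ->]]].
  by exists (val s); rewrite size_tuple.
by exists (in_tuple l); rewrite lT eqxx.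
Qed.

Lemma prodT_tlength k (v : {perm 'I_k.+2}) : v \in 'Alt_('I_k.+2) ->
  prodT (tlength v) v.
Proof.
elim: k v => [|k IH] v.
  rewrite trivial_Alt_2 ?card_ord // inE => /eqP ->; apply/prodTP; exists [::].
  rewrite big_nil; split=> //; apply/esym/eqP.
  by rewrite subn_eq0 leq_max ncycles1 card_ord leqnn.
have lift_prodT (u : {perm 'I_k.+2}) :
    prodT (tlength u) u -> prodT (tlength u) (lift_last u).
  case/prodTP => l [lsz lT eu]; apply/prodTP; exists (map lift_last l).
  split; first by rewrite size_map.
  - by rewrite all_map; apply/allP => t /(allP lT) /lift_last_TA.
  - by rewrite eu lift_last_prod.
case: (eqVneq (v ord_max) ord_max) => [/lift_last_fixed[u ->]|/gen_last_factor[j [u ->]]].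
  by rewrite lift_last_Alt tlength_lift_last => /IH /lift_prodT.
rewrite gen_last_lift_Alt tlength_gen_last => /IH /lift_prodT /prodTP[l [lsz lT el]].
by apply/prodTP; exists (gen_last j :: l); rewrite /= lsz gen_last_TA lT big_cons -el.
Qed.

Lemma lenT_eq_tlength k (v : {perm 'I_k.+2}) m : v \in 'Alt_('I_k.+2) ->
  lenT_eq v m = (m == tlength v).
Proof.
move=> vA; have lb r : prodT r v -> (tlength v <= r)%N.
  by case/prodTP => l [<- lT ->]; apply: tlength_prod_TA.
apply/andP/eqP => [[vm /forallP minm]|->].
  apply/eqP; rewrite eqn_leq lb // andbT leqNgt; apply/negP => lt.
  by have := minm (Ordinal lt); rewrite /= prodT_tlength.
split; first exact: prodT_tlength.
by apply/forallP => r; apply/negP => /lb; rewrite leqNgt ltn_ord.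
Qed.

Definition alt_tlength k m := [set v in 'Alt_('I_k.+2) | tlength v == m].

Lemma in_alt_tlength k m v :
  (v \in alt_tlength k m) = (v \in 'Alt_('I_k.+2)) && (tlength v == m).
Proof. by rewrite /alt_tlength setIdE in_setI [X in _ && X]in_set. Qed.

Lemma a_count_alt_tlength k m : a_count k.+2 m = #|alt_tlength k m|.
Proof.
apply: eq_card => v; rewrite in_alt_tlength setIdE in_setI; apply: andb_id2l => vA.
by rewrite in_set lenT_eq_tlength // eq_sym.
Qed.

Definition glue_last k (p : 'I_k.+2 * {perm 'I_k.+2}) : {perm 'I_k.+3} :=
  gen_last p.1 * lift_last p.2.

Lemma glue_last_inj k : injective (@glue_last k).
Proof.
move=> [j u] [j' u'] /= e.
have /perm_inj /lift_inj ej :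
    sigma12 k.+1 (lift ord_max j) = sigma12 k.+1 (lift ord_max j').
  by rewrite -(invN_gen_last j u) -(invN_gen_last j' u'); move: e; rewrite /glue_last => ->.
by move: e; rewrite /glue_last /= ej => /mulgI /lift_last_inj ->.
Qed.

Lemma alt_tlength_split k m : (0 < m)%N -> alt_tlength k.+1 m =
  lift_last @: alt_tlength k m :|: @glue_last k @: setX setT (alt_tlength k m.-1).
Proof.
move=> m_gt0; apply/setP => v; rewrite in_setU in_alt_tlength.
apply/andP/orP => [[vA /eqP vm]|[/imsetP[u]|/imsetP[[j u]]]]; last 2 first.
- rewrite in_alt_tlength => /andP[uA /eqP um] ->.
  by rewrite lift_last_Alt tlength_lift_last um.
- rewrite in_setX in_setT /= in_alt_tlength => /andP[uA /eqP um] ->.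
  by rewrite gen_last_lift_Alt tlength_gen_last um prednK.
case: (eqVneq (v ord_max) ord_max) => [/lift_last_fixed[u ev]|/gen_last_factor[j [u ev]]].
  left; apply/imsetP; exists u => //.
  move: vA vm; rewrite ev in_alt_tlength lift_last_Alt tlength_lift_last.
  by move=> -> ->; rewrite eqxx.
right; apply/imsetP; exists (j, u) => //.
move: vA vm; rewrite ev in_setX in_setT /= in_alt_tlength gen_last_lift_Alt tlength_gen_last.
by move=> -> <-; rewrite eqxx.
Qed.

Lemma disjoint_lift_glue_last k
    (A : {set {perm 'I_k.+2}}) (B : {set 'I_k.+2 * {perm 'I_k.+2}}) :
  [disjoint lift_last @: A & @glue_last k @: B].
Proof.
apply/pred0P => v /=; apply/negP => /andP[/imsetP[u _ ->] /imsetP[p _ e]].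
by have := gen_last_max p.1 p.2; rewrite -[_ * _]/(glue_last p) -e lift_last_max eqxx.
Qed.

Lemma card_alt_tlength k m : (0 < m)%N ->
  #|alt_tlength k.+1 m| = (k.+2 * #|alt_tlength k m.-1| + #|alt_tlength k m|)%N.
Proof.
move=> m_gt0; rewrite alt_tlength_split // cardsU.
rewrite (disjoint_setI0 (disjoint_lift_glue_last _ _)) cards0 subn0.
rewrite !card_imset; try exact: lift_last_inj; try exact: glue_last_inj.
by rewrite cardsX cardsT card_ord addnC.
Qed.

Theorem corollary5p4 (n m : nat) :
  (3 <= n)%N -> (1 <= m)%N -> (m <= n - 2)%N ->
  a_count n m = ((n - 1) * a_count (n - 1) (m - 1) + a_count (n - 1) m)%N.
Proof.
case: n => [|[|[|k]]] // _ m_gt0 _.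
by rewrite subn1 /= !a_count_alt_tlength subn1 card_alt_tlength.
Qed.
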